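(* Let $\pi$ be a set of primes, $G$ a finite group, $A$ a normal subgroup of $G$ and $H$ a $\pi$-Hall subgroup of $G$, and assume $HAC_G(A)\trianglelefteq G$ (which holds in particular if $HA\trianglelefteq G$). Then an $A$-class of $\pi$-Hall subgroups of $A$ (i.e. a set $\{U^x\mid x\in A\}$ with $U$ a $\pi$-Hall subgroup of $A$) is an $A$-class of $G$-induced $\pi$-Hall subgroups if and only if it is invariant under conjugation by $H$.
   Context: All groups are finite. A subgroup $H$ of $G$ is a $\pi$-Hall subgroup if all prime divisors of $|H|$ lie in $\pi$ and no prime divisor of $|G:H|$ lies in $\pi$. For a subnormal subgroup $A$ of a group $G$ possessing $\pi$-Hall subgroups, a $G$-induced $\pi$-Hall subgroup of $A$ is a subgroup of the form $K\cap A$ where $K$ is a $\pi$-Hall subgroup of $G$; an $A$-class of $G$-induced $\pi$-Hall subgroups is a set $\{(K\cap A)^x\mid x\in A\}$ with $K$ a $\pi$-Hall subgroup of $G$. *)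

From mathcomp Require Import all_boot all_fingroup all_solvable.
Set Implicit Arguments. Unset Strict Implicit. Unset Printing Implicit Defensive.
Local Open Scope group_scope.

Definition A_class (gT : finGroupType) (A U : {set gT}) : {set {set gT}} :=
  [set U :^ x | x in A].

Definition induced_class (gT : finGroupType) (A K : {set gT}) : {set {set gT}} :=
  [set (K :&: A) :^ x | x in A].

Definition conj_invariant (gT : finGroupType) (H : {set gT}) (C : {set {set gT}}) : Prop :=
  forall h, h \in H -> [set V :^ h | V in C] = C.

From mathcomp Require Import all_boot all_fingroup all_solvable.
Set Implicit Arguments. Unset Strict Implicit. Unset Printing Implicit Defensive.
Local Open Scope group_scope.

(* The argument rests on a characterisation of invariance (A_class_invariantP):
   when H normalises A, the A-class of V is stable under conjugation by H iff
   H \subset 'N(V) * A.  Both directions of the theorem are then statements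
   about normalisers:
   - If K is a pi-Hall subgroup of G, then modulo M = A 'C_G(A) the images of
     H and K coincide (HM/M is a normal pi-Hall subgroup of G/M), so
     H \subset K M; since K and 'C_G(A) normalise K :&: A, this gives
     H \subset 'N(K :&: A) * A.
   - Conversely, if H \subset 'N(U) * A, put B = H A and N = 'N_B(U), so that
     N A = B (a Frattini-type argument).  Schur-Zassenhaus applied in N / U
     yields a pi-Hall subgroup K of N with K :&: A = U, and index counting
     shows that K is a pi-Hall subgroup of B, hence of G. *)

Section InducedHallClasses.

Variable gT : finGroupType.
Implicit Types (A B G H K M N Q U : {group gT}) (V : {set gT}).

Lemma A_class_conj A V g :
  g \in 'N(A) -> [set W :^ g | W in A_class A V] = A_class A (V :^ g).
Proof.
move=> Ng; rewrite /A_class -imset_comp -{2}(normP Ng) -imset_comp.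
by apply: eq_imset => x /=; rewrite -!conjsgM conjgC.
Qed.

Lemma A_class_in A V x : x \in A -> A_class A (V :^ x) = A_class A V.
Proof.
move=> Ax; rewrite /A_class -{2}(lcoset_id Ax) -lcosetE /lcoset -imset_comp.
by apply: eq_imset => y /=; rewrite conjsgM.
Qed.

Lemma A_class_invariantP A V (H : {set gT}) :
  H \subset 'N(A) -> conj_invariant H (A_class A V) <-> H \subset 'N(V) * A.
Proof.
move=> nAH; split=> [inv | sHNA h Hh].
  apply/subsetP=> h Hh.
  have: V :^ h \in A_class A V.
    rewrite -(inv h Hh); apply: imset_f.
    by apply/imsetP; exists 1; rewrite ?conjsg1.
  case/imsetP=> x Ax defVh; rewrite -(mulgKV x h) mem_mulg //.
  by apply/normP; rewrite conjsgM defVh conjsgK.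
case/mulsgP: (subsetP sHNA h Hh) => n a Nn Aa defh.
by rewrite A_class_conj ?(subsetP nAH) // defh conjsgM (normP Nn) A_class_in.
Qed.

Variable pi : nat_pred.

(* If H M is normal, any other pi-Hall subgroup K has the same image as H
   modulo M, because H M / M is then the unique pi-Hall subgroup of G / M. *)
Lemma Hall_sub_mul_normal G H K M :
  pi.-Hall(G) H -> pi.-Hall(G) K -> M <| G -> H * M <| G -> H \subset K * M.
Proof.
move=> hallH hallK /andP[_ nMG] nsHM_G.
have nMH := subset_trans (pHall_sub hallH) nMG.
have nMK := subset_trans (pHall_sub hallK) nMG.
have hallHM := quotient_pHall nMH hallH; have hallKM := quotient_pHall nMK hallK.
have nsHM : H / M <| G / M by rewrite -quotientMidr quotient_normal.
have defHM : K / M = H / M.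
  apply/eqP; rewrite eqEcard (sub_normal_Hall hallHM nsHM) ?quotientS ?(pHall_sub hallK) //.
  by rewrite (pHall_pgroup hallKM) (card_Hall hallHM) (card_Hall hallKM) leqnn.
by rewrite (normC nMK) -quotientK // defHM quotientK // mulG_subr.
Qed.

Lemma Hall_sub_norm_trace G A H K :
    A <| G -> pi.-Hall(G) H -> pi.-Hall(G) K -> H * A * 'C_G(A) <| G ->
  H \subset 'N(K :&: A) * A.
Proof.
move=> nsAG hallH hallK nsHAC; have [sAG nAG] := andP nsAG.
have nAC : 'C_G(A) \subset 'N(A) by rewrite subIset // cent_sub orbT.
have nsCG : 'C_G(A) <| G by rewrite -{2}(setIidPl nAG) subcent_normal.
pose M := (A <*> 'C_G(A))%G; have nsMG : M <| G by rewrite normalY.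
have defM : M :=: A * 'C_G(A) := norm_joinEr nAC.
apply: subset_trans (Hall_sub_mul_normal hallH hallK nsMG _) _.
  by rewrite defM mulgA.
rewrite defM -(normC nAC) mulgA mulSg // mul_subG //.
  by rewrite normsI ?normG // (subset_trans (pHall_sub hallK)).
by rewrite cents_norm // (subset_trans (subsetIr _ _)) // centS ?subsetIr.
Qed.

(* Schur-Zassenhaus lifting: if U is a normal pi-Hall subgroup of the normal
   subgroup Q of N and N / Q is a pi-group, then a complement to Q / U in
   N / U pulls back to a pi-Hall subgroup of N meeting Q in U. *)
Lemma Hall_lift_over_normal N Q U :
    Q <| N -> U <| N -> pi.-Hall(Q) U -> pi.-nat #|N : Q| ->
  exists2 K : {group gT}, pi.-Hall(N) K & K :&: Q = U.
Proof.
move=> nsQN nsUN hallU piNQ; have [sUQ piU pi'QU] := and3P hallU.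
have nsUQ : U <| Q := normalS sUQ (normal_sub nsQN) nsUN.
have hallQU : pi^'.-Hall(N / U) (Q / U).
  rewrite /pHall quotientS ?normal_sub //= pnatNK /pgroup.
  rewrite card_quotient ?normal_norm // pi'QU (pnat_dvd _ piNQ) //.
  by rewrite index_quotient // subIset // normal_norm ?orTb.
have [X complX] :=
  splitsP (SchurZassenhaus_split (pHall_Hall hallQU) (quotient_normal U nsQN)).
have [tiQX _] := complP complX.
have hallX : pi.-Hall(N / U) X by rewrite -(compl_p'Hall _ hallQU).
pose K := (coset U @*^-1 X)%G.
have nsUK : U <| K by rewrite -cosetpre1 cosetpre_normal normal1.
exists K; first by rewrite -(pquotient_pHall piU nsUN nsUK) cosetpreK.
by rewrite -(quotientGK nsUQ) -morphpreI setIC tiQX cosetpre1.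
Qed.

Lemma pHall_index_trans B N K :
  pi.-Hall(N) K -> N \subset B -> pi^'.-nat #|B : N| -> pi.-Hall(B) K.
Proof.
case/and3P=> sKN piK pi'NK sNB pi'BN.
by rewrite /pHall (subset_trans sKN sNB) piK -(Lagrange_index sNB sKN) pnatM pi'BN.
Qed.

(* A pi-Hall subgroup of an intermediate group B containing a pi-Hall
   subgroup of G is a pi-Hall subgroup of G, as both have order |G|_pi. *)
Lemma pHall_sub_overgroup G B H K :
  pi.-Hall(G) H -> H \subset B -> B \subset G -> pi.-Hall(B) K -> pi.-Hall(G) K.
Proof.
move=> hallH sHB sBG hallK; apply/pHallP; split.
  exact: subset_trans (pHall_sub hallK) sBG.
by rewrite (card_Hall hallK) -(card_Hall (pHall_subl sHB sBG hallH)) (card_Hall hallH).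
Qed.

Lemma Hall_with_trace G A H U :
    A <| G -> pi.-Hall(G) H -> pi.-Hall(A) U -> H \subset 'N(U) * A ->
  exists2 K : {group gT}, pi.-Hall(G) K & K :&: A = U.
Proof.
move=> nsAG hallH hallU sHNA; have [sAG nAG] := andP nsAG.
have [sUA _ pi'AU] := and3P hallU.
have nAH := subset_trans (pHall_sub hallH) nAG.
pose B := (H <*> A)%G; have defB : B :=: H * A := norm_joinEl nAH.
have sBG : B \subset G by rewrite join_subG (pHall_sub hallH).
pose N := 'N_B(U)%G; have sNG : N \subset G := subset_trans (subsetIl _ _) sBG.
have nAN : N \subset 'N(A) := subset_trans sNG nAG.
have defNA : N * A = B.
  apply/eqP; rewrite eqEsubset mul_subG ?subsetIl ?joing_subr //=.
  rewrite group_modr ?joing_subr // subsetI subxx defB /=.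
  by apply: subset_trans (mulSg A sHNA) _; rewrite -mulgA mulGid.
have nsUN : U <| N := normalSG (subset_trans sUA (joing_subr H A)).
have hallUQ : pi.-Hall(N :&: A) U.
  by rewrite (pHall_subl _ (subsetIr _ _) hallU) // subsetI normal_sub.
have piNQ : pi.-nat #|N : N :&: A|.
  rewrite indexgI -indexMg -(normC nAN) defNA defB (normC nAH) indexMg.
  exact: pnat_dvd (dvdn_indexg _ _) (pHall_pgroup hallH).
have [K hallKN defU] := Hall_lift_over_normal (normalGI sNG nsAG) nsUN hallUQ piNQ.
exists K; last by rewrite -defU setIA (setIidPl (pHall_sub hallKN)).
apply: pHall_sub_overgroup hallH (joing_subl H A) sBG _.
apply: pHall_index_trans hallKN (subsetIl _ _) _.
rewrite -defNA indexMg -indexgI (pnat_dvd _ pi'AU) // indexgS // subsetI sUA.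
exact: normal_sub nsUN.
Qed.

End InducedHallClasses.

Theorem lemma6 (gT : finGroupType) (pi : nat_pred) (G A H : {group gT})
  (nAG : A <| G) (hallH : pi.-Hall(G) H)
  (nHAC : (H * A * 'C_G(A)) <| G)
  (U : {group gT}) (hallU : pi.-Hall(A) U) :
  (exists2 K : {group gT}, pi.-Hall(G) K & A_class A U = induced_class A K)
  <-> conj_invariant H (A_class A U).
Proof.
have nAH : H \subset 'N(A) := subset_trans (pHall_sub hallH) (normal_norm nAG).
split=> [[K hallK ->] | /(A_class_invariantP _ nAH) sHNA].
  apply/(A_class_invariantP _ nAH).
  exact: Hall_sub_norm_trace nAG hallH hallK nHAC.
have [K hallK defU] := Hall_with_trace nAG hallH hallU sHNA.
by exists K => //; rewrite /induced_class defU.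
Qed.
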